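(* Let $G=(V,E)$ be an undirected graph, let $X\subset V$ be connected with $\mathrm{width}(X)=+\infty$, $Y=V\setminus X$, $f\in L^\infty(X)$ with $\sup_X f<0$, and $g\in L^\infty(Y)$. Then the problem \[ \begin{cases}\Delta_\infty u(x)=f(x), & x\in X,\\ u(x)=g(x), & x\in Y,\end{cases} \] admits no bounded solution $u:V\to\mathbb{R}$.
   Context: For $x,y\in V$ write $x\sim y$ if $\{x,y\}\in E$. The combinatorial distance $d(A,B)$ between vertex sets is the infimum of the lengths of paths joining them; $\partial X=\{y\notin X:\ y\sim x\text{ for some }x\in X\}$ and $\mathrm{width}(X)=\sup_{x\in X}d(\partial X,x)$. The discrete infinity Laplacian is $\Delta_\infty u(x)=\inf_{y\sim x}u(y)+\sup_{y\sim x}u(y)-2u(x)$. *)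

From HB Require Import structures.
From mathcomp Require Import all_boot all_order all_algebra.
From mathcomp Require Import all_classical all_reals.
Set Implicit Arguments. Unset Strict Implicit. Unset Printing Implicit Defensive.
Import Order.TTheory GRing.Theory Num.Theory.
Local Open Scope classical_set_scope.
Local Open Scope ring_scope.

Definition undirected (V : Type) (E : V -> V -> Prop) : Prop :=
  (forall x y, E x y -> E y x) /\ (forall x, ~ E x x).

Inductive walk (V : Type) (R : V -> V -> Prop) : V -> V -> nat -> Prop :=
| walk0 x : walk R x x 0
| walkS x y z n : R x y -> walk R y z n -> walk R x z n.+1.

Definition connected_set (V : Type) (E : V -> V -> Prop) (X : set V) : Prop :=
  forall x y, X x -> X y ->
    exists n, walk (fun a b => [/\ E a b, X a & X b]) x y n.

Definition boundary (V : Type) (E : V -> V -> Prop) (X : set V) : set V :=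
  [set y | ~ X y /\ exists x, X x /\ E y x].

(* d(A, x) >= n : every path joining A and x has length at least n
   (d is the infimum of path lengths, +oo if there is none). *)
Definition dist_ge (V : Type) (E : V -> V -> Prop) (A : set V) (x : V)
  (n : nat) : Prop :=
  forall a m, A a -> walk E a x m -> (n <= m)%N.

Definition infinite_width (V : Type) (E : V -> V -> Prop) (X : set V) : Prop :=
  forall n : nat, exists x, X x /\ dist_ge E (boundary E X) x n.

Definition inf_laplacian (R : realType) (V : Type) (E : V -> V -> Prop)
  (u : V -> R) (x : V) : R :=
  inf [set u y | y in [set y | E x y]] + sup [set u y | y in [set y | E x y]]
  - 2 * u x.

Definition bounded_on (R : realType) (V : Type) (A : set V) (h : V -> R) : Prop :=
  exists M : R, forall x, A x -> `|h x| <= M.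

From HB Require Import structures.
From mathcomp Require Import all_boot all_order all_algebra.
From mathcomp Require Import all_classical all_reals.
From mathcomp Require Import lra.
Import Order.TTheory GRing.Theory Num.Theory.
Local Open Scope classical_set_scope.
Local Open Scope ring_scope.

(* Since [inf + sup - 2 u(x) = f(x) <= -c], the infimum of [u] over the
   neighbours of [x] is at most [u(x) - c/2], so every vertex of [X] has a
   neighbour where [u] is smaller by at least [c/4].  Starting from a vertex
   at distance > N from the boundary, such steps can be taken N times without
   leaving [X], so [u] drops by [N c / 4]: impossible for bounded [u] and
   large [N]. *)

Lemma bounded_image_has_lbound {R : realType} {T : Type} (u : T -> R)
    (A : set T) :
  bounded_on setT u -> has_lbound (u @` A).
Proof.
move=> [M HM]; exists (- M) => _ [y _ <-].
by have /andP[] : - M <= u y <= M by rewrite -ler_norml; exact: HM.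
Qed.

Lemma bounded_image_has_ubound {R : realType} {T : Type} (u : T -> R)
    (A : set T) :
  bounded_on setT u -> has_ubound (u @` A).
Proof.
move=> [M HM]; exists M => _ [y _ <-].
by have /andP[] : - M <= u y <= M by rewrite -ler_norml; exact: HM.
Qed.

Lemma inf_laplacian_descent {R : realType} {V : Type} (E : V -> V -> Prop)
    (u : V -> R) (x : V) {e : R} :
  bounded_on setT u -> (exists y, E x y) -> 0 < e ->
  exists2 y, E x y & u y < u x + inf_laplacian E u x / 2 + e.
Proof.
move=> ub [z Exz] e0; set S := u @` [set y | E x y].
have Sne : S !=set0 by exists (u z), z.
have lbS : has_lbound S by exact: bounded_image_has_lbound.
have inf_le_sup : inf S <= sup S.
  apply: (@le_trans _ _ (u z)); first by apply: ge_inf => //; exists z.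
  by apply: ub_le_sup; [exact: bounded_image_has_ubound | exists z].
have [_ [y Exy <-] uy_lt] := inf_adherent e0 (conj Sne lbS).
by exists y => //; rewrite /inf_laplacian -/S; lra.
Qed.

Lemma le_sup_bounded_on {R : realType} {T : Type} {A : set T} {h : T -> R}
    {x : T} :
  bounded_on A h -> A x -> h x <= sup (h @` A).
Proof.
move=> [M HM] Ax; apply: ub_le_sup; last by exists x.
by exists M => _ [y Ay <-]; exact: le_trans (ler_norm _) (HM y Ay).
Qed.

Lemma walk_far_vertex_neighbour_in {V : Type} {E : V -> V -> Prop}
    {X : set V} {x0 y y' : V} {n k : nat} :
  (forall a b, E a b -> E b a) -> dist_ge E (boundary E X) x0 n ->
  X y -> E y y' -> walk E y x0 k -> (k.+1 < n)%N -> X y'.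
Proof.
move=> Esym far Xy Eyy' wy lt_kn; apply: contrapT => notXy'.
have := far y' k.+1 (conj notXy' (ex_intro _ y (conj Xy (Esym _ _ Eyy')))).
by move=> /(_ (walkS (Esym _ _ Eyy') wy)); rewrite leqNgt lt_kn.
Qed.

Section DescendingWalk.

Variables (R : realType) (V : Type) (E : V -> V -> Prop) (X : set V).
Variables (u : V -> R) (c : R).
Hypothesis Esym : forall a b, E a b -> E b a.
Hypothesis descent : forall x, X x -> exists2 y, E x y & u y + c <= u x.

Lemma descending_walk {x0 : V} {n : nat} :
  X x0 -> dist_ge E (boundary E X) x0 n ->
  forall k, (k < n)%N ->
    exists y, [/\ X y, walk E y x0 k & u y + k%:R * c <= u x0].
Proof.
move=> Xx0 far; elim=> [_ | k IH lt_kn].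
  by exists x0; split; [| exact: walk0 | rewrite mul0r addr0].
have [y [Xy wy uy_le]] := IH (ltnW lt_kn).
have [y' Eyy' uy'_le] := descent _ Xy.
exists y'; split.
- exact: walk_far_vertex_neighbour_in Esym far Xy Eyy' wy lt_kn.
- exact: walkS (Esym _ _ Eyy') wy.
- by rewrite -natr1; lra.
Qed.

Lemma descent_not_bounded : 0 < c -> infinite_width E X -> ~ bounded_on setT u.
Proof.
move=> c0 wide [M HM].
pose N := (Num.truncn (2 * M / c)).+1.
have MN : 2 * M < N%:R * c by rewrite -ltr_pdivrMr //; exact: truncnS_gt.
have [x0 [Xx0 far]] := wide N.+1.
have [y [_ _ uy_le]] := descending_walk Xx0 far N (ltnSn N).
have /andP[] : - M <= u x0 <= M by rewrite -ler_norml; exact: HM.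
have /andP[] : - M <= u y <= M by rewrite -ler_norml; exact: HM.
lra.
Qed.

End DescendingWalk.

Theorem proposition4p1 (R : realType) (V : Type) (E : V -> V -> Prop)
  (X : set V) (f g : V -> R) :
  undirected E ->
  (forall x, X x -> exists y, E x y) ->
  connected_set E X ->
  infinite_width E X ->
  bounded_on X f ->
  sup [set f x | x in X] < 0 ->
  bounded_on (~` X) g ->
  ~ exists u : V -> R,
      bounded_on setT u /\
      (forall x, X x -> inf_laplacian E u x = f x) /\
      (forall y, (~` X) y -> u y = g y).
Proof.
move=> [Esym _] has_nb _ wide bf sup_lt0 _ [u [ub [lap _]]].
set c := - sup (f @` X).
have c0 : 0 < c by rewrite oppr_gt0.
have c4 : 0 < c / 4 by lra.
apply: (@descent_not_bounded R V E X u (c / 4) Esym _ c4 wide ub) => x Xx.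
have [y Exy] := inf_laplacian_descent E u x ub (has_nb x Xx) c4.
have fx_le : f x <= - c by rewrite opprK; exact: le_sup_bounded_on bf Xx.
by rewrite lap // => uy_lt; exists y => //; lra.
Qed.
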